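(* Let $W$ be a non-trivial cyclically reduced word over $Y_C\cup Y_C^{-1}$ which represents the identity in the group $Q_C=\langle Y_C\mid \mathcal{S}_C\rangle$. Then some non-trivial subword of some cyclic permutation of $W$ is a cyclic permutation of (a reduced word representing) an element of the normal closure $\langle\langle \mathcal{S}_C\rangle\rangle^F$ of $\mathcal{S}_C$ in $F$. In particular, $\|W\|\ge C$.
   Context: Let $Q$ be a finitely generated recursively presented group with presentation $\langle Y\mid\mathcal{S}\rangle$, where $Y=\{y_1,\dots,y_m\}$ is finite, $\mathcal{S}$ is a recursive set of positive words over $Y$ (words using only letters of $Y$, not $Y^{-1}$), and the empty word is not in $\mathcal{S}$. Let $C\ge1$ be an integer. For $i=1,\dots,m$ let $Y_{C,i}=\{a_{1,i},\dots,a_{C,i}\}$, $Y_C=\bigcup_iY_{C,i}$ (all letters distinct), $A_i=a_{1,i}\cdots a_{C,i}$, $\mathcal{D}=\{A_1,\dots,A_m\}$, and $F=\langle\mathcal{D}\rangle\le F(Y_C)$ (free with basis $\mathcal{D}$). For $r=r(y_1,\dots,y_m)\in\mathcal{S}$ let $r_C=r(A_1,\dots,A_m)$ and $\mathcal{S}_C=\{r_C:r\in\mathcal{S}\}$. $\|W\|$ is the number of letters of $W$. *)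

From mathcomp Require Import all_boot.
Set Implicit Arguments. Unset Strict Implicit. Unset Printing Implicit Defensive.

(* Words over X ∪ X^{-1}: a letter is (x, b) with b = true for x, b = false for x^{-1}. *)
Definition word (T : Type) := seq (T * bool).

Definition inv_letter {T : Type} (x : T * bool) : T * bool := (x.1, ~~ x.2).
Definition inv_word {T : Type} (w : word T) : word T := rev (map inv_letter w).

Definition freduce {T : eqType} (w : word T) : word T :=
  foldr (fun x acc => match acc with
                      | y :: t => if y == inv_letter x then t else x :: acc
                      | [::] => [:: x] end) [::] w.

Fixpoint reducedb {T : eqType} (w : word T) : bool :=
  match w with
  | x :: ((y :: _) as t) => (y != inv_letter x) && reducedb t
  | _ => true
  end.

Definition cyc_reduced {T : eqType} (w : word T) : bool :=
  reducedb w && (if w is x :: t then last x t != inv_letter x else true).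

(* w (read as an element of the free group F(T)) lies in the normal closure, inside
   the subgroup whose elements are represented by the words satisfying [Conj], of the
   set of words satisfying [Rel]: w is freely equal to a product of conjugates
   u r^{±1} u^{-1} with Conj u and Rel r. *)
Definition in_nclosure {T : eqType} (Conj Rel : word T -> Prop) (w : word T) : Prop :=
  exists l : seq (word T * word T * bool),
    (forall p, p \in l -> Conj p.1.1 /\ Rel p.1.2) /\
    freduce w = freduce (flatten [seq u ++ (if e then r else inv_word r) ++ inv_word u
                                 | '(u, r, e) <- l]).

(* Y_C = {a_{j,i} : j < C, i < m}; letter a_{j+1,i+1} is (j, i). *)
Definition YC (C m : nat) := ('I_C * 'I_m)%type.

Definition Aword (C m : nat) (i : 'I_m) : word (YC C m) :=
  [seq ((j, i), true) | j <- enum 'I_C].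

(* r_C = r(A_1, ..., A_m) for a positive word r over Y *)
Definition relC (C m : nat) (r : seq 'I_m) : word (YC C m) :=
  flatten [seq Aword C i | i <- r].

(* word over D ∪ D^{-1} expanded as a word over Y_C: these represent the elements of F *)
Definition FwordC (C m : nat) (f : word 'I_m) : word (YC C m) :=
  flatten [seq if e then Aword C i else inv_word (Aword C i) | '(i, e) <- f].

Definition inF (C m : nat) (u : word (YC C m)) : Prop :=
  exists f : word 'I_m, u = FwordC C f.

Definition in_SC (C m : nat) (S : pred (seq 'I_m)) (w : word (YC C m)) : Prop :=
  exists r, S r /\ w = relC C r.
Arguments in_SC C m S w : clear implicits.
Arguments inF C m u : clear implicits.

(* Read words over Y_C as paths in the graph obtained by gluing, at a base point, m cycles
   ("petals") of length C, the i-th one spelling A_i.  Traversing petal i through its last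
   edge contributes the letter A_i^{±1} of a word over D, and a closed path at the base
   point is freely equal to the element of F spelled by these letters.  Call a closed
   subpath null if this element lies in N = <<S_C>>^F.

   The free group on Y_C acts on chains, stacks of segments (start, coset of N, end)
   recording the path read so far, where a segment is discarded as soon as it closes up
   with trivial coset.  A relator r_C runs around petals with label in N, so it acts
   trivially; hence so does W.  But if W had no null subpath, the chain of W would keep a
   nonempty top segment.  A null loop of W is then shaved of inverse end letters until it
   is cyclically reduced, and rotated to start at the base point: this gives a reduced
   word U in N.  Finally, a nonempty reduced closed path at the base point runs around a
   whole petal, so it has length at least C. *)

From mathcomp Require Import all_boot.
From mathcomp Require Import zify.
From Stdlib Require Import Classical_Prop ClassicalEpsilon.
From Stdlib Require Import FunctionalExtensionality PropExtensionality.
Set Implicit Arguments. Unset Strict Implicit. Unset Printing Implicit Defensive.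

Section FreeReduction.
Variable T : eqType.
Implicit Types (x y : T * bool) (u v w z : word T).

Definition reduce_step x w : word T :=
  if w is y :: t then (if y == inv_letter x then t else x :: w) else [:: x].

Lemma freduce_cons x w : freduce (x :: w) = reduce_step x (freduce w).
Proof. by []. Qed.

Lemma inv_letterK : involutive (@inv_letter T).
Proof. by case=> a b; rewrite /inv_letter /= negbK. Qed.

Lemma inv_letter_eqF x : (inv_letter x == x) = false.
Proof. by case: x => a b; rewrite /inv_letter /= xpair_eqE eqxx /=; case: b. Qed.

Lemma inv_wordK : involutive (@inv_word T).
Proof.
by move=> w; rewrite /inv_word map_rev revK -map_comp (eq_map inv_letterK) map_id.
Qed.

Lemma inv_word_cat u v : inv_word (u ++ v) = inv_word v ++ inv_word u.
Proof. by rewrite /inv_word map_cat rev_cat. Qed.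

Lemma inv_word_cons x u : inv_word (x :: u) = rcons (inv_word u) (inv_letter x).
Proof. by rewrite /inv_word /= rev_cons. Qed.

Lemma reduce_step_reduced x w : reducedb w -> reducedb (reduce_step x w).
Proof.
case: w => [|y t] //= Rt.
case: ifP => [_|/negbT ne]; first by case: t Rt => //= z t /andP[].
by rewrite [reducedb (x :: _)]/= ne Rt.
Qed.

Lemma reduce_stepK x w : reducedb w -> reduce_step x (reduce_step (inv_letter x) w) = w.
Proof.
case: w => [|y t] Rw; rewrite /reduce_step; first by rewrite eqxx.
rewrite inv_letterK; move: Rw; case: eqP => [->|ne] Rw; last by rewrite eqxx.
by case: t Rw => [|z t] //= /andP[/negbTE ->].
Qed.

Lemma freduce_reduced w : reducedb (freduce w).
Proof. by elim: w => //= x w IH; apply: reduce_step_reduced. Qed.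

Lemma freduce_id w : reducedb w -> freduce w = w.
Proof.
elim: w => // x w IH Rw; rewrite freduce_cons IH; last by case: w Rw {IH} => //= y t /andP[].
case: w Rw {IH} => //= y t /andP[ne _]; case: ifP => // /eqP E.
by move: ne; rewrite E eqxx.
Qed.

Lemma freduce_idem w : freduce (freduce w) = freduce w.
Proof. exact/freduce_id/freduce_reduced. Qed.

Lemma foldr_reduce_step acc x w : reducedb acc -> reducedb w ->
  foldr reduce_step acc (reduce_step x w) = reduce_step x (foldr reduce_step acc w).
Proof.
move=> Racc; case: w => [|y t] //= Rw; case: ifP => // /eqP E.
have Rt : reducedb (foldr reduce_step acc t).
  by elim: t {Rw} => //= z t IH; apply: reduce_step_reduced.
by rewrite E reduce_stepK.
Qed.

Lemma foldr_reduce_step_freduce acc u : reducedb acc ->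
  foldr reduce_step acc u = foldr reduce_step acc (freduce u).
Proof.
move=> Racc; elim: u => //= x u IH.
by rewrite IH foldr_reduce_step // freduce_reduced.
Qed.

Lemma freduce_cat u v : freduce (u ++ v) = freduce (freduce u ++ freduce v).
Proof.
rewrite /freduce !foldr_cat -/(freduce v) -/(freduce (freduce v)) freduce_idem.
exact: foldr_reduce_step_freduce (freduce_reduced v).
Qed.

Lemma freduce_cat_congr u u' v v' : freduce u = freduce u' -> freduce v = freduce v' ->
  freduce (u ++ v) = freduce (u' ++ v').
Proof. by move=> Eu Ev; rewrite freduce_cat Eu Ev -freduce_cat. Qed.

Lemma freduce_catV u : freduce (u ++ inv_word u) = [::].
Proof.
elim: u => // x u IH.
by rewrite inv_word_cons -cats1 cat_cons catA freduce_cons freduce_cat IH /= eqxx.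
Qed.

Lemma freduce_Vcat u : freduce (inv_word u ++ u) = [::].
Proof. by rewrite -{2}(inv_wordK u) freduce_catV. Qed.

Lemma freduce_cancel u z v : freduce (u ++ (inv_word z ++ z) ++ v) = freduce (u ++ v).
Proof.
rewrite freduce_cat [freduce (_ ++ v)]freduce_cat freduce_Vcat freduce_idem.
by rewrite -freduce_cat.
Qed.

Lemma freduce_cancelV u z v : freduce (u ++ (z ++ inv_word z) ++ v) = freduce (u ++ v).
Proof. by rewrite -{1}(inv_wordK z) freduce_cancel. Qed.

Lemma freduce_cancell z w : freduce (inv_word z ++ z ++ w) = freduce w.
Proof. by rewrite (catA (inv_word z)) -[_ ++ w]cat0s freduce_cancel. Qed.

Lemma freduce_cancelr z w : freduce (w ++ inv_word z ++ z) = freduce w.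
Proof. by rewrite -[inv_word z ++ z]cats0 freduce_cancel cats0. Qed.

Lemma freduce_inv_word_congr u v :
  freduce u = freduce v -> freduce (inv_word u) = freduce (inv_word v).
Proof.
move=> E; rewrite -[inv_word u]cats0 -(freduce_cancelV _ v) cats0 catA.
rewrite freduce_cat [freduce (_ ++ v)]freduce_cat -E -(freduce_cat (inv_word u)).
by rewrite freduce_Vcat freduce_idem.
Qed.

Definition non_inverse x y := y != inv_letter x.

Lemma reducedb_path x t : reducedb (x :: t) = path non_inverse x t.
Proof. by elim: t x => //= y t IH x; rewrite IH. Qed.

Lemma reducedb_cat u v : reducedb (u ++ v) -> reducedb u /\ reducedb v.
Proof.
case: u => [|x u] //; rewrite cat_cons reducedb_path cat_path => /andP[Ru Rv].
split; first by rewrite reducedb_path.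
by case: v Rv => [|y v] // /andP[_]; rewrite reducedb_path.
Qed.

Lemma reducedb_infix u w v : reducedb (u ++ w ++ v) -> reducedb w.
Proof. by case/reducedb_cat => _ /reducedb_cat []. Qed.

Lemma cyc_reduced_rot n w : cyc_reduced w -> reducedb (rot n w).
Proof.
rewrite /rot -{1}(cat_take_drop n w); move: (take n w) (drop n w) => [|x u] [|y v].
1-3: by rewrite ?cats0 => /andP[].
rewrite /cyc_reduced -/(reducedb (x :: u ++ y :: v)) reducedb_path cat_path /=.
case/andP => /and3P[Ru nyx Rv]; rewrite last_cat /= => nxy.
rewrite -/(reducedb (y :: v ++ x :: u)) reducedb_path cat_path /= Rv Ru andbT.
by apply: contra nxy => /eqP ->; rewrite inv_letterK.
Qed.

Lemma not_cyc_reduced_split (p : word T) :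
  reducedb p -> p != [::] -> ~~ cyc_reduced p ->
  exists x t, p = [:: x] ++ t ++ [:: inv_letter x].
Proof.
case: p => [//|x t] Rp _; rewrite /cyc_reduced Rp /= negbK => /eqP.
case/lastP: t {Rp} => [/= /eqP|t y]; first by rewrite eq_sym inv_letter_eqF.
by rewrite last_rcons => ->; exists x, t; rewrite cats1.
Qed.

End FreeReduction.

Section PetalWords.
Variables C m : nat.

Lemma FwordC_cat (f g : word 'I_m) : FwordC C (f ++ g) = FwordC C f ++ FwordC C g.
Proof. by rewrite /FwordC map_cat flatten_cat. Qed.

Lemma FwordC1 (i : 'I_m) e :
  FwordC C [:: (i, e)] = if e then Aword C i else inv_word (Aword C i).
Proof. by rewrite /FwordC /= cats0. Qed.

Lemma FwordC_inv (f : word 'I_m) : FwordC C (inv_word f) = inv_word (FwordC C f).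
Proof.
elim: f => // -[i e] f IH.
rewrite inv_word_cons -cats1 -[(i, e) :: f]cat1s !FwordC_cat IH inv_word_cat !FwordC1.
by case: e; rewrite ?inv_wordK.
Qed.

Lemma size_Aword (i : 'I_m) : size (Aword C i) = C.
Proof. by rewrite /Aword size_map size_enum_ord. Qed.

Lemma nth_Aword x0 (i : 'I_m) (j : 'I_C) : nth x0 (Aword C i) j = ((j, i), true).
Proof. by rewrite /Aword (nth_map j) ?size_enum_ord // nth_ord_enum. Qed.

Lemma take_Aword (i : 'I_m) (j : 'I_C) :
  take j.+1 (Aword C i) = rcons (take j (Aword C i)) ((j, i), true).
Proof. by rewrite (take_nth ((j, i), true)) ?size_Aword // nth_Aword. Qed.

End PetalWords.

Section NormalClosure.
Variables (C m : nat) (S : pred (seq 'I_m)).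
Local Notation word_Y := (word (YC C m)).
Local Notation word_D := (word 'I_m).

Definition conj_prod (l : seq (word_Y * word_Y * bool)) : word_Y :=
  flatten [seq u ++ (if e then r else inv_word r) ++ inv_word u | '(u, r, e) <- l].

Lemma conj_prod_cons u r e l : conj_prod ((u, r, e) :: l) =
  (u ++ (if e then r else inv_word r) ++ inv_word u) ++ conj_prod l.
Proof. by []. Qed.

Lemma conj_prod_cat l1 l2 : conj_prod (l1 ++ l2) = conj_prod l1 ++ conj_prod l2.
Proof. by rewrite /conj_prod map_cat flatten_cat. Qed.

Lemma inv_conj_prod l :
  inv_word (conj_prod l) = conj_prod (rev [seq (p.1.1, p.1.2, ~~ p.2) | p <- l]).
Proof.
elim: l => // -[[u r] e] l IH.
rewrite map_cons rev_cons -cats1 conj_prod_cat -IH conj_prod_cons /= !inv_word_cat.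
by rewrite inv_wordK {3}/conj_prod /= cats0 -!catA; case: e; rewrite ?inv_wordK.
Qed.

Lemma conj_prod_conj z l : freduce (z ++ conj_prod l ++ inv_word z) =
  freduce (conj_prod [seq (z ++ p.1.1, p.1.2, p.2) | p <- l]).
Proof.
elim: l => [|[[u r] e] l IH] /=; first by rewrite freduce_catV.
rewrite !conj_prod_cons [RHS]freduce_cat -IH -freduce_cat inv_word_cat.
set X := if e then r else inv_word r.
transitivity (freduce ((z ++ u ++ X ++ inv_word u) ++ (inv_word z ++ z) ++
                      conj_prod l ++ inv_word z)).
  by rewrite freduce_cancel -!catA.
by rewrite -!catA.
Qed.

Definition inN (w : word_Y) := in_nclosure (inF C m) (in_SC C m S) w.

Lemma inN_freduce w w' : freduce w = freduce w' -> inN w -> inN w'.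
Proof. by move=> E [l [Hl El]]; exists l; split => //; rewrite -E. Qed.

Lemma inN_nil : inN [::].
Proof. by exists [::]. Qed.

Lemma inN_cat u v : inN u -> inN v -> inN (u ++ v).
Proof.
move=> [l1 [H1 E1]] [l2 [H2 E2]]; exists (l1 ++ l2); split.
  by move=> p; rewrite mem_cat => /orP[/H1|/H2].
by rewrite -/(conj_prod _) conj_prod_cat; apply: freduce_cat_congr.
Qed.

Lemma inN_inv u : inN u -> inN (inv_word u).
Proof.
move=> [l [Hl El]]; exists (rev [seq (p.1.1, p.1.2, ~~ p.2) | p <- l]); split.
  by move=> p; rewrite mem_rev => /mapP[q /Hl Hq ->].
by rewrite -/(conj_prod _) -inv_conj_prod; apply: freduce_inv_word_congr.
Qed.

Lemma inN_conj (f : word_D) w : inN w -> inN (FwordC C f ++ w ++ inv_word (FwordC C f)).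
Proof.
move=> [l [Hl El]]; exists [seq (FwordC C f ++ p.1.1, p.1.2, p.2) | p <- l]; split.
  move=> p /mapP[q /Hl [[g ->] Hq] ->]; split => //.
  by exists (f ++ g); rewrite FwordC_cat.
rewrite -/(conj_prod _) -conj_prod_conj.
exact: freduce_cat_congr (freduce_cat_congr _ _).
Qed.

Lemma inN_relC r : S r -> inN (relC C r).
Proof.
move=> Sr; exists [:: ([::], relC C r, true)]; split.
  by move=> p; rewrite inE => /eqP -> /=; split; [exists [::] | exists r].
by rewrite /= !cats0.
Qed.

End NormalClosure.

Section Cosets.
Variables (C m : nat) (S : pred (seq 'I_m)).
Local Notation word_D := (word 'I_m).
Local Notation inN := (@inN C m S).
Implicit Types d e : word_D.

Definition trivN d := inN (FwordC C d).
Definition eqN d d' := inN (inv_word (FwordC C d) ++ FwordC C d').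

Lemma eqN_refl d : eqN d d.
Proof. by apply: (inN_freduce _ (inN_nil C S)); rewrite freduce_Vcat. Qed.

Lemma eqN_sym d d' : eqN d d' -> eqN d' d.
Proof. by move/inN_inv; rewrite /eqN inv_word_cat inv_wordK. Qed.

Lemma eqN_trans d1 d2 d3 : eqN d1 d2 -> eqN d2 d3 -> eqN d1 d3.
Proof.
move=> E12 E23; apply: inN_freduce (inN_cat E12 E23).
by rewrite -catA (catA (FwordC C d2)) freduce_cancelV.
Qed.

Lemma eqN_catr d d' e : eqN d d' -> eqN (d ++ e) (d' ++ e).
Proof.
move=> /(inN_conj (inv_word e)).
by rewrite /eqN !FwordC_cat FwordC_inv inv_wordK inv_word_cat !catA.
Qed.

Lemma eqN_catl d e e' : eqN e e' -> eqN (d ++ e) (d ++ e').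
Proof.
apply: inN_freduce.
by rewrite !FwordC_cat inv_word_cat -!catA [RHS]freduce_cat freduce_cancell -freduce_cat.
Qed.

Lemma eqN_nil d : eqN d [::] <-> trivN d.
Proof.
rewrite /eqN /trivN /= cats0; split; last exact: inN_inv.
by move/inN_inv; rewrite inv_wordK.
Qed.

Lemma trivN_conjK e d : trivN (e ++ d ++ inv_word e) -> trivN d.
Proof.
move=> /(inN_conj (inv_word e)); apply: inN_freduce.
by rewrite !FwordC_cat !FwordC_inv inv_wordK -!catA freduce_cancell freduce_cancelr.
Qed.

Lemma trivN_rot d1 d2 : trivN (d1 ++ d2) -> trivN (d2 ++ d1).
Proof.
move=> /(inN_conj (inv_word d1)); apply: inN_freduce.
by rewrite !FwordC_cat !FwordC_inv inv_wordK -!catA freduce_cancell.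
Qed.

(* Cosets are predicates, so that by extensionality equal cosets are equal terms and the
   chains below can be compared with [=]. *)
Definition coset d : word_D -> Prop := eqN d.

Lemma coset_eq d d' : coset d = coset d' <-> eqN d d'.
Proof.
split=> [E|E]; first by rewrite -/(coset d) E; apply: eqN_refl.
apply: functional_extensionality => q; apply: propositional_extensionality.
by split; [apply: eqN_trans (eqN_sym E) | apply: eqN_trans E].
Qed.

Lemma coset_nil d : coset d = coset [::] <-> trivN d.
Proof. by rewrite coset_eq eqN_nil. Qed.

Lemma coset_catr d d' e : coset d = coset d' -> coset (d ++ e) = coset (d' ++ e).
Proof. by move=> /coset_eq E; apply/coset_eq/eqN_catr. Qed.

Lemma coset_catl d e e' : coset e = coset e' -> coset (d ++ e) = coset (d ++ e').
Proof. by move=> /coset_eq E; apply/coset_eq/eqN_catl. Qed.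

End Cosets.

Section PetalGraph.
Variables C m : nat.
Local Notation letter := ((YC C m) * bool)%type.
Local Notation word_Y := (word (YC C m)).
Local Notation word_D := (word 'I_m).

(* Position s of petal i is the vertex (s, i) for 0 < s < C, positions 0 and C being the
   base point; the letter a_{j+1,i} is the edge from position j to position j+1. *)
Definition vertex := (nat * nat)%type.
Definition base : vertex := (0, 0).
Definition petal_vertex (s : nat) (i : 'I_m) : vertex :=
  if (s == 0) || (s == C) then base else (s, val i).

Definition src (x : letter) : vertex :=
  if x.2 then petal_vertex x.1.1 x.1.2 else petal_vertex x.1.1.+1 x.1.2.
Definition tgt (x : letter) : vertex :=
  if x.2 then petal_vertex x.1.1.+1 x.1.2 else petal_vertex x.1.1 x.1.2.

Definition Dletter (x : letter) : word_D :=
  if x.1.1.+1 == C then [:: (x.1.2, x.2)] else [::].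
Definition Dlabel (p : word_Y) : word_D := flatten (map Dletter p).

Fixpoint is_path (a : vertex) (p : word_Y) (b : vertex) : bool :=
  if p is x :: p' then (src x == a) && is_path (tgt x) p' b else a == b.

Definition path_end (a : vertex) (p : word_Y) := last a (map tgt p).

Definition petal_prefix (v : vertex) : word_Y :=
  oapp (fun i : 'I_m => take v.1 (Aword C i)) [::] (insub v.2).

Lemma Dlabel_cat p q : Dlabel (p ++ q) = Dlabel p ++ Dlabel q.
Proof. by rewrite /Dlabel map_cat flatten_cat. Qed.

Lemma Dlabel1 x : Dlabel [:: x] = Dletter x.
Proof. by rewrite /Dlabel /= cats0. Qed.

Lemma src_inv x : src (inv_letter x) = tgt x.
Proof. by case: x => [[j i] []]. Qed.

Lemma tgt_inv x : tgt (inv_letter x) = src x.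
Proof. by case: x => [[j i] []]. Qed.

Lemma Dletter_inv x : Dletter (inv_letter x) = inv_word (Dletter x).
Proof. by case: x => [[j i] b]; rewrite /Dletter /=; case: ifP. Qed.

Lemma is_path_cat a p q b :
  is_path a (p ++ q) b = is_path a p (path_end a p) && is_path (path_end a p) q b.
Proof.
elim: p a => [|x p IH] a /=; first by rewrite eqxx.
by rewrite IH /path_end /= andbA.
Qed.

Lemma is_path_end a p b : is_path a p b -> b = path_end a p.
Proof. by elim: p a => [|x p IH] a /=; [move/eqP | case/andP => _ /IH]. Qed.

Lemma is_path_catI a p c q b : is_path a p c -> is_path c q b -> is_path a (p ++ q) b.
Proof. by move=> Pp Pq; rewrite is_path_cat -(is_path_end Pp) Pp. Qed.

Lemma is_path_catE a p q b : is_path a (p ++ q) b ->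
  exists c, is_path a p c /\ is_path c q b.
Proof. by rewrite is_path_cat => /andP[Pp Pq]; exists (path_end a p). Qed.

Lemma petal_prefix_base : petal_prefix base = [::].
Proof. by rewrite /petal_prefix /=; case: (insub 0) => [o|] /=; rewrite ?take0. Qed.

Lemma petal_prefix_vertex s i : s < C -> petal_prefix (petal_vertex s i) = take s (Aword C i).
Proof.
move=> ltsC; rewrite /petal_vertex; case: (s =P 0) => [->|_] /=.
  by rewrite take0 petal_prefix_base.
by rewrite (ltn_eqF ltsC) /petal_prefix /= valK.
Qed.

Lemma petal_vertexC i : petal_vertex C i = base.
Proof. by rewrite /petal_vertex eqxx orbT. Qed.

Lemma petal_edge_word (j : 'I_C) (i : 'I_m) :
  freduce (petal_prefix (petal_vertex j i) ++ [:: ((j, i), true)] ++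
           inv_word (petal_prefix (petal_vertex j.+1 i))) =
  freduce (FwordC C (Dletter ((j, i), true))).
Proof.
rewrite catA cats1 petal_prefix_vertex // -take_Aword /Dletter /=.
have := ltn_ord j; rewrite leq_eqVlt => /orP[/eqP eqC|ltC].
  rewrite eqC eqxx petal_vertexC petal_prefix_base cats0 FwordC1.
  by rewrite take_oversize // size_Aword.
by rewrite (ltn_eqF ltC) petal_prefix_vertex // freduce_catV.
Qed.

Lemma petal_letter_word x :
  freduce (petal_prefix (src x) ++ [:: x] ++ inv_word (petal_prefix (tgt x))) =
  freduce (FwordC C (Dletter x)).
Proof.
case: x => [[j i] []]; first exact: petal_edge_word.
have := freduce_inv_word_congr (petal_edge_word j i).
by rewrite -FwordC_inv -Dletter_inv !inv_word_cat inv_wordK -catA.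
Qed.

Lemma petal_path_word a p b : is_path a p b ->
  freduce (petal_prefix a ++ p ++ inv_word (petal_prefix b)) = freduce (FwordC C (Dlabel p)).
Proof.
elim: p a => [|x p IH] a /=; first by move/eqP <-; rewrite freduce_catV.
case/andP => /eqP <- /IH Ep.
rewrite -[x :: p]cat1s Dlabel_cat Dlabel1 FwordC_cat.
rewrite -(freduce_cat_congr (petal_letter_word x) Ep) -!catA.
set t := petal_prefix (tgt x).
transitivity (freduce ((petal_prefix (src x) ++ [:: x]) ++ (inv_word t ++ t) ++
                      p ++ inv_word (petal_prefix b))).
  by rewrite freduce_cancel -!catA.
by rewrite -!catA.
Qed.

Lemma Aword_infix_path (i : 'I_m) (s : seq 'I_C) n : map val s = iota n (size s) ->
  is_path (petal_vertex n i) [seq ((j, i), true) | j <- s] (petal_vertex (n + size s) i).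
Proof.
elim: s n => [|j s IH] n /=; first by rewrite addn0.
by case=> Ej Es; rewrite /src /tgt /= Ej eqxx addnS -addSn; apply: IH.
Qed.

Lemma Aword_loop (i : 'I_m) : is_path base (Aword C i) base.
Proof.
have := @Aword_infix_path i (enum 'I_C) 0.
by rewrite size_enum_ord val_enum_ord add0n petal_vertexC; apply.
Qed.

Lemma relC_loop (r : seq 'I_m) : is_path base (relC C r) base.
Proof. by elim: r => [|i r IH] //=; apply: is_path_catI (Aword_loop i) IH. Qed.

Lemma petal_vertex_base s i : petal_vertex s i = base -> (s == 0) || (s == C).
Proof. by rewrite /petal_vertex; case: ifP => [//|+ [E _]]; rewrite E. Qed.

Lemma petal_vertex_inj s i s' i' : petal_vertex s i != base ->
  petal_vertex s i = petal_vertex s' i' -> s = s' /\ i = i'.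
Proof.
rewrite /petal_vertex; case: ifP => [_|H1]; first by rewrite eqxx.
case: ifP => H2 _ E; first by case: E => E1 _; move: H1; rewrite E1.
by case: E => -> /val_inj ->.
Qed.

Lemma reduced_petal_step (j j' : 'I_C) (i i' : 'I_m) s s' :
  tgt ((j, i), s) = src ((j', i'), s') -> tgt ((j, i), s) != base ->
  ((j', i'), s') != inv_letter ((j, i), s) ->
  [/\ i' = i, s' = s & if s then val j' = j.+1 else val j = j'.+1].
Proof.
rewrite /tgt /src /inv_letter /=.
case: s; case: s' => /= E N ne; case: (petal_vertex_inj N E) => Ej Ei; subst i' => //.
  by case: Ej => /val_inj Ej; move: ne; rewrite Ej eqxx.
by move/val_inj: Ej ne => ->; rewrite eqxx.
Qed.

Lemma reduced_path_petal p (j : 'I_C) (i : 'I_m) s a b :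
  reducedb (((j, i), s) :: p) -> is_path a (((j, i), s) :: p) b ->
  (exists p1 p2, [/\ ((j, i), s) :: p = p1 ++ p2, p1 != [::], p2 != [::],
                    is_path a p1 base & is_path base p2 b])
  \/ (exists j' : 'I_C, b = tgt ((j', i), s) /\
          (if s then val j' = j + size p else val j = j' + size p)).
Proof.
elim: p j i s a => [|y p IH] j i s a.
  by move=> _ /andP[_ /eqP <-]; right; exists j; case: s; rewrite addn0.
set x := ((j, i), s) => Rxp Pxp.
have [ny Ryp] : y != inv_letter x /\ reducedb (y :: p) by case/andP: Rxp.
have [Ea Pyp] : src x = a /\ is_path (tgt x) (y :: p) b by case/andP: Pxp => /eqP.
case: (tgt x =P base) => [E|/eqP N].
  left; exists [:: x], (y :: p); split => //; last by rewrite -E.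
  by rewrite /= Ea E !eqxx.
clear Rxp Pxp; case: y ny Ryp Pyp => [[jy iy] sy] ny Ryp Pyp.
have [[p1 [p2 [E p1n p2n P1 P2]]]|[j' [Eb Ej']]] := IH _ _ _ _ Ryp Pyp.
  left; exists (x :: p1), p2; split => //; first by rewrite E.
  by rewrite /= Ea eqxx P1.
have Ey : tgt x = src ((jy, iy), sy) by case/andP: Pyp => /eqP.
have [Ei Es Ej] := reduced_petal_step Ey N ny; subst iy sy.
by right; exists j'; split => //; move: Ej Ej'; case: (s) => /=; lia.
Qed.

Lemma reduced_loop_rot_base p a : reducedb p -> p != [::] -> is_path a p a ->
  exists k, is_path base (rot k p) base.
Proof.
case: (a =P base) => [-> _ _ Pp|/eqP Na]; first by exists 0; rewrite rot0.
case: p => [//|[[j i] s] p] Rp _ Pp.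
have [[p1 [p2 [-> _ _ P1 P2]]]|[j' [Eb Ej']]] := reduced_path_petal Rp Pp.
  by exists (size p1); rewrite rot_size_cat; apply: is_path_catI P2 P1.
have Ea : src ((j, i), s) = a by case/andP: Pp => /eqP.
clear Rp Pp; move: Ea Eb Na Ej'; rewrite /src /tgt; case: s => /= <- Eb Na Ej';
  by have [E _] := petal_vertex_inj Na Eb; lia.
Qed.

Lemma reduced_base_loop_size p : reducedb p -> p != [::] -> is_path base p base -> C <= size p.
Proof.
elim: {p}_.+1 {-2}p (ltnSn (size p)) => // n IH [//|[[j i] s] p] ltpn Rp _ Pp.
have [[p1 [p2 [E p1n p2n P1 P2]]]|[j' [Eb Ej']]] := reduced_path_petal Rp Pp.
  have Rp1 : reducedb p1 by move: Rp; rewrite E => /reducedb_cat [].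
  have lt1 : size p1 < n.
    move: ltpn; rewrite E size_cat ltnS; apply: leq_trans.
    by rewrite -addn1 leq_add2l lt0n size_eq0.
  by rewrite E size_cat; apply: leq_trans (IH _ lt1 Rp1 p1n P1) (leq_addr _ _).
have Ea : src ((j, i), s) = base by case/andP: Pp => /eqP.
have := ltn_ord j; have := ltn_ord j'.
clear Rp Pp ltpn; move: Ea Eb Ej'; rewrite /src /tgt.
by case: s => /= /petal_vertex_base + /esym/petal_vertex_base; lia.
Qed.

End PetalGraph.

Section ChainAction.
Variables (C m : nat) (S : pred (seq 'I_m)).
Local Notation letter := ((YC C m) * bool)%type.
Local Notation word_Y := (word (YC C m)).
Local Notation word_D := (word 'I_m).
Local Notation coset := (@coset C m S).
Local Notation eqN := (@eqN C m S).
Local Notation trivN := (@trivN C m S).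
Local Notation src := (@src C m).
Local Notation tgt := (@tgt C m).
Local Notation Dletter := (@Dletter C m).
Local Notation Dlabel := (@Dlabel C m).

(* A chain lists, newest first, segments (u, c, w) standing for paths from u to w with
   D-label in the coset c.  [chain_mul L a e b] appends a path from a to b with label e,
   extending the newest segment when it ends at a; a segment that closes up with trivial
   coset is dropped. *)
Definition segment := (vertex * (word_D -> Prop) * vertex)%type.

Definition is_unit_coset (c : word_D -> Prop) : bool :=
  if excluded_middle_informative (c = coset [::]) then true else false.

Definition coset_mul (c : word_D -> Prop) (e : word_D) : word_D -> Prop :=
  fun q => exists d, c = coset d /\ eqN (d ++ e) q.

Definition chain_push u c w (L : seq segment) : seq segment :=
  if (u == w) && is_unit_coset c then L else (u, c, w) :: L.

Definition chain_mul (L : seq segment) a e b : seq segment :=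
  if L is (u, c, w) :: L' then
    if w == a then chain_push u (coset_mul c e) b L' else chain_push a (coset e) b L
  else chain_push a (coset e) b [::].

Definition chain_step L (x : letter) := chain_mul L (src x) (Dletter x) (tgt x).
Definition chain_act (w : word_Y) L := foldl chain_step L w.

Fixpoint normal_chain (L : seq segment) : Prop :=
  if L is (u, c, w) :: L' then
    [/\ exists d, c = coset d, ~~ ((u == w) && is_unit_coset c),
        (if L' is (_, _, w') :: _ then w' != u else True) & normal_chain L']
  else True.

Lemma is_unit_cosetP c : is_unit_coset c = true <-> c = coset [::].
Proof. by rewrite /is_unit_coset; case: excluded_middle_informative. Qed.

Lemma coset_mulE d e : coset_mul (coset d) e = coset (d ++ e).
Proof.
apply: functional_extensionality => q; apply: propositional_extensionality.
split => [[d' [/coset_eq E Eq]]|Eq]; last by exists d.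
exact: eqN_trans (eqN_catr e E) Eq.
Qed.

Lemma chain_mul_normal L a e b : normal_chain L -> normal_chain (chain_mul L a e b).
Proof.
case: L => [|[[u c] w] L'] /=.
  by rewrite /chain_push; case: ifP => // H _; split; [exists e | rewrite H | |].
case=> [[d Ed] Hn Ha Hv]; case: eqP => [Ewa|Nwa]; rewrite /chain_push; case: ifP => // H.
- by split => //; [exists (d ++ e); rewrite Ed coset_mulE | rewrite H].
- by split => //; exists d.
- by split => //; [exists e | rewrite H | apply/eqP | split => //; exists d].
Qed.

Lemma chain_mul_mul L a e b e' b' : normal_chain L ->
  chain_mul (chain_mul L a e b) b e' b' = chain_mul L a (e ++ e') b'.
Proof.
case: L => [|[[u c] w] L'] /=.
  rewrite /chain_push; case: ifP => [/andP[/eqP <- /is_unit_cosetP E]|_] _ /=.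
    by rewrite (coset_catr e' E).
  by rewrite eqxx coset_mulE.
case=> [[d Ed] Hn Ha Hv]; case: eqP => [Ewa|Nwa].
  rewrite {1}/chain_push; case: ifP => [/andP[/eqP Eub /is_unit_cosetP E]|_] /=; last first.
    by rewrite eqxx Ed !coset_mulE catA.
  move: E; rewrite Ed coset_mulE => E; rewrite coset_mulE catA (coset_catr e' E) /=.
  by case: L' Ha Hv => [|[[u1 c1] w1] L''] /=; rewrite ?Eub // => /negbTE ->.
rewrite {1}/chain_push; case: ifP => [/andP[/eqP Eab /is_unit_cosetP E]|_] /=; last first.
  by rewrite eqxx coset_mulE.
by rewrite -Eab (coset_catr e' E) /=; case: eqP.
Qed.

Lemma chain_mul_loop L a e : normal_chain L -> coset e = coset [::] -> chain_mul L a e a = L.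
Proof.
case: L => [|[[u c] w] L'] /=.
  by rewrite /chain_push eqxx => _ /is_unit_cosetP ->.
case=> [[d Ed] Hn Ha Hv] E; case: eqP => [Ewa|Nwa].
  by rewrite Ed coset_mulE (coset_catl d E) cats0 -Ed /chain_push -Ewa (negbTE Hn).
by rewrite /chain_push eqxx (proj2 (is_unit_cosetP _) E).
Qed.

Lemma chain_stepK L x : normal_chain L -> chain_step (chain_step L x) (inv_letter x) = L.
Proof.
move=> NL; rewrite /chain_step src_inv tgt_inv Dletter_inv chain_mul_mul //.
apply: chain_mul_loop => //; apply/coset_nil.
by apply: inN_freduce (inN_nil C S); rewrite /trivN FwordC_cat FwordC_inv freduce_catV.
Qed.

Lemma chain_act_cat u v L : chain_act (u ++ v) L = chain_act v (chain_act u L).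
Proof. exact: foldl_cat. Qed.

Lemma chain_act_normal w L : normal_chain L -> normal_chain (chain_act w L).
Proof. by elim: w L => //= x w IH L NL; apply/IH/chain_mul_normal. Qed.

Lemma chain_actK u L : normal_chain L -> chain_act (inv_word u) (chain_act u L) = L.
Proof.
elim: u L => //= x u IH L NL.
rewrite inv_word_cons -cats1 chain_act_cat IH; last exact: chain_mul_normal.
by rewrite /= chain_stepK.
Qed.

Lemma chain_act_freduce w L : normal_chain L -> chain_act (freduce w) L = chain_act w L.
Proof.
elim: w L => //= x w IH L NL.
rewrite -(IH _ (chain_mul_normal _ _ _ NL)).
case: (freduce w) (freduce_reduced w) => [|y t] //= Rt.
by case: eqP => [->|] //; rewrite chain_stepK.
Qed.

Lemma chain_act_path a p b L : normal_chain L -> is_path a p b ->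
  chain_act p L = chain_mul L a (Dlabel p) b.
Proof.
elim: p a L => [|x p IH] a L /= NL; first by move/eqP <-; rewrite chain_mul_loop.
case/andP => /eqP Ex Pp.
by rewrite (IH _ _ (chain_mul_normal _ _ _ NL) Pp) /chain_step Ex chain_mul_mul.
Qed.

Lemma chain_act_relC r L : normal_chain L -> S r -> chain_act (relC C r) L = L.
Proof.
move=> NL Sr; rewrite (chain_act_path NL (relC_loop C r)) chain_mul_loop //.
apply/coset_nil; apply: inN_freduce (inN_relC C Sr).
by rewrite -(petal_path_word (relC_loop C r)) petal_prefix_base cats0.
Qed.

Lemma chain_act_conj_prod l L : normal_chain L ->
  (forall p, p \in l -> in_SC C m S p.1.2) -> chain_act (conj_prod l) L = L.
Proof.
elim: l L => [|[[u r] e] l IH] L NL Hl //=.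
rewrite conj_prod_cons chain_act_cat IH; last 2 first.
- exact: chain_act_normal.
- by move=> p lp; apply: Hl; rewrite inE lp orbT.
have [r0 [Sr0 ->]] : in_SC C m S r by apply: (Hl (u, r, e)); rewrite inE eqxx.
have Nu := chain_act_normal u NL.
rewrite !chain_act_cat {Hl IH}; case: e; first by rewrite chain_act_relC // chain_actK.
by rewrite -{1}(chain_act_relC Nu Sr0) chain_actK // chain_actK.
Qed.

Lemma chain_act_nclosure W :
  in_nclosure (fun _ => True) (in_SC C m S) W -> chain_act W [::] = [::].
Proof.
move=> [l [Hl E]].
rewrite -chain_act_freduce // E chain_act_freduce //.
by apply: chain_act_conj_prod => // p /Hl [].
Qed.

End ChainAction.

Section NullLoops.
Variables (C m : nat) (S : pred (seq 'I_m)).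
Local Notation word_Y := (word (YC C m)).
Local Notation inN := (@inN C m S).
Local Notation coset := (@coset C m S).
Local Notation trivN := (@trivN C m S).
Local Notation src := (@src C m).
Local Notation tgt := (@tgt C m).
Local Notation Dletter := (@Dletter C m).
Local Notation Dlabel := (@Dlabel C m).
Local Notation is_path := (@is_path C m).
Local Notation chain_act := (@chain_act C m S).
Local Notation chain_step := (@chain_step C m S).
Local Notation chain_push := (@chain_push C m S).

Definition has_null_loop (w : word_Y) := exists p0 p p1 a,
  [/\ w = p0 ++ p ++ p1, p != [::], is_path a p a & trivN (Dlabel p)].

Definition top_segment (w : word_Y) (L : seq (segment m)) := exists u q e rest,
  [/\ L = (u, coset (Dlabel q), e) :: rest, exists r, w = r ++ q, q != [::] & is_path u q e].

Lemma has_null_loop_rcons w x : has_null_loop w -> has_null_loop (rcons w x).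
Proof.
case=> p0 [p [p1 [a [-> pn Pp Tp]]]].
by exists p0, p, (rcons p1 x), a; rewrite -!cats1 -!catA.
Qed.

Lemma chain_step_fresh w x L : ~ has_null_loop (rcons w x) ->
  (if L is (_, _, e) :: _ then e != src x else True) ->
  top_segment (rcons w x) (chain_step L x).
Proof.
move=> Hw HL; exists (src x), [:: x], (tgt x), L.
split => //; [|by exists w; rewrite cats1 | by rewrite /= !eqxx].
have -> : chain_step L x = chain_push (src x) (coset (Dletter x)) (tgt x) L.
  by case: L HL => [|[[u c] e] L'] //= /negbTE ->.
rewrite /chain_push Dlabel1; case: ifP => // /andP[/eqP E /is_unit_cosetP /coset_nil T].
by case: Hw; exists w, [:: x], [::], (src x); rewrite cats1 /= E !eqxx Dlabel1.
Qed.

Lemma chain_step_top w x L : ~ has_null_loop (rcons w x) -> top_segment w L ->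
  top_segment (rcons w x) (chain_step L x).
Proof.
move=> Hw [u [q [e [rest [-> [r Er] qn Pq]]]]].
case: (e =P src x) => [Ee|/eqP ne]; last exact: chain_step_fresh.
have qxn : rcons q x != [::] by rewrite -size_eq0 size_rcons.
have Pqx : is_path u (rcons q x) (tgt x).
  by rewrite -cats1; apply: (is_path_catI Pq); rewrite /= Ee !eqxx.
have Dqx : Dlabel q ++ Dletter x = Dlabel (rcons q x) by rewrite -cats1 Dlabel_cat Dlabel1.
have Ewx : rcons w x = r ++ rcons q x by rewrite Er rcons_cat.
rewrite /chain_step /chain_mul Ee eqxx coset_mulE Dqx /chain_push.
case: ifP => [/andP[/eqP Eu /is_unit_cosetP /coset_nil T]|_].
  case: Hw; exists r, (rcons q x), [::], u; split => //; first by rewrite cats0.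
  by rewrite {2}Eu.
by exists u, (rcons q x), (tgt x), rest; split => //; exists r.
Qed.

Lemma chain_act_top w : w != [::] -> ~ has_null_loop w -> top_segment w (chain_act w [::]).
Proof.
elim/last_ind: w => [//|w x IH] _ Hwx.
rewrite /chain_act foldl_rcons -/(chain_act w [::]).
case: (w =P [::]) => [Ew|/eqP wn]; first by subst w; apply: chain_step_fresh.
apply: chain_step_top => //; apply: IH => // Hw.
exact/Hwx/has_null_loop_rcons.
Qed.

Lemma null_loop_of_nclosure W : W != [::] ->
  in_nclosure (fun _ => True) (in_SC C m S) W -> has_null_loop W.
Proof.
move=> Wn HW; apply: NNPP => Hnull.
have [u [q [e [rest [E _ _ _]]]]] := chain_act_top Wn Hnull.
by rewrite chain_act_nclosure in E.
Qed.

Lemma null_loop_peel x t a : reducedb ([:: x] ++ t ++ [:: inv_letter x]) ->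
  is_path a ([:: x] ++ t ++ [:: inv_letter x]) a ->
  trivN (Dlabel ([:: x] ++ t ++ [:: inv_letter x])) ->
  [/\ t != [::], is_path (tgt x) t (tgt x) & trivN (Dlabel t)].
Proof.
move=> Rxt /andP[_ /is_path_catE [c [Pt /andP[/eqP Ec _]]]] Txt; split.
- by apply: contraTneq Rxt => ->; rewrite /= eqxx.
- by rewrite -Ec src_inv in Pt.
- by apply: (@trivN_conjK _ _ _ (Dletter x)); rewrite -Dletter_inv -!Dlabel1 -!Dlabel_cat.
Qed.

Lemma null_loop_cyc_reduced p a : reducedb p -> p != [::] -> is_path a p a ->
  trivN (Dlabel p) -> exists q0 q q1 b,
  [/\ p = q0 ++ q ++ q1, q != [::], cyc_reduced q, is_path b q b & trivN (Dlabel q)].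
Proof.
elim: {p}_.+1 {-2}p (ltnSn (size p)) a => // n IH p ltpn a Rp pn Pp Tp.
have [Cp|/(not_cyc_reduced_split Rp pn) [x [t Ep]]] := boolP (cyc_reduced p).
  by exists [::], p, [::], a; rewrite cats0.
subst p.
have [tn Pt Tt] := null_loop_peel Rp Pp Tp.
have lttn : size t < n by move: ltpn; rewrite !size_cat /= addn1 ltnS => /ltnW.
have [q0 [q [q1 [b [-> qn Cq Pq Tq]]]]] := IH _ lttn _ (reducedb_infix Rp) tn Pt Tt.
by exists (x :: q0), q, (q1 ++ [:: inv_letter x]), b; rewrite -!catA.
Qed.

Lemma trivN_Dlabel_rot k q : trivN (Dlabel q) -> trivN (Dlabel (rot k q)).
Proof. by rewrite -{1}(cat_take_drop k q) /rot !Dlabel_cat; apply: trivN_rot. Qed.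

Lemma base_loop_inN p : is_path base p base -> trivN (Dlabel p) -> inN p.
Proof.
move=> Pp; apply: inN_freduce.
by rewrite -(petal_path_word Pp) petal_prefix_base cats0.
Qed.

End NullLoops.

Theorem lemma3p3 (m C : nat) (S : pred (seq 'I_m)) (W : word (YC C m)) :
  (1 <= C)%N ->
  ~~ S [::] ->
  W != [::] ->
  cyc_reduced W ->
  (* W represents the identity of Q_C = < Y_C | S_C > *)
  in_nclosure (fun _ => True) (in_SC C m S) W ->
  (exists k (V : word (YC C m)),
     [/\ V != [::], infix V (rot k W) &
         exists U : word (YC C m),
           [/\ reducedb U, in_nclosure (inF C m) (in_SC C m S) U &
               exists k', V = rot k' U]])
  /\ (C <= size W)%N.
Proof.
move=> _ _ Wn Wc WN.
have [p0 [p [p1 [a [EW pn Pp Tp]]]]] := null_loop_of_nclosure Wn WN.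
have Rp : reducedb p by case/andP: Wc; rewrite EW => /reducedb_infix.
have [q0 [q [q1 [b [Eq qn Cq Pq Tq]]]]] := null_loop_cyc_reduced Rp pn Pp Tp.
have [k Pk] := reduced_loop_rot_base (proj1 (andP Cq)) qn Pq.
have Iq : infix q W by rewrite EW Eq -!catA catA infix_infix.
split.
  exists 0, q; split => //; first by rewrite rot0.
  exists (rot k q); split; first exact: cyc_reduced_rot.
    exact/(base_loop_inN Pk)/trivN_Dlabel_rot.
  by exists (size q - k); rewrite -{1}(rotK k q) /rotr size_rot.
apply: leq_trans (size_infix Iq); rewrite -(size_rot k).
apply: reduced_base_loop_size Pk; first exact: cyc_reduced_rot.
by rewrite -size_eq0 size_rot size_eq0.
Qed.
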